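(* For any digraph $G$, $\mathrm{sstat}_{\mathtt{vsc}}(G)\ge 1+\mathrm{cr}(G)$.
   Context: All digraphs are finite, simple, without self-loops and have at least one vertex (induced subgraphs appearing as game data may be empty). For a finite set $V$, $V^*$ is the set of finite words over $V$, $\epsilon$ the empty word; $X \preceq Y$ means $X$ is a prefix of $Y$; for $X=a_1\cdots a_n$, $|X|=n$ and $\mathrm{let}(X)=\{a_1,\dots,a_n\}$. $A\Delta B$ is symmetric difference. For $X\subseteq V(G)$, $G\setminus X$ is the subgraph induced by $V(G)\setminus X$. Induced subgraphs are identified with their vertex sets. Cycle-rank $\mathrm{cr}(G)$: $0$ if $G$ is acyclic; $1+\min_{v\in V(G)}\mathrm{cr}(G\setminus\{v\})$ if $G$ is strongly connected (and not acyclic); otherwise the maximum of $\mathrm{cr}(H)$ over strongly connected components $H$ of $G$. A position is a pair $(X,R)$ with $X\in V(G)^*$ and $R$ a (possibly empty) induced subgraph of $G\setminus\mathrm{let}(X)$; it is a $\mathtt{vsc}$-position if $R$ is a strongly connected component of $G\setminus\mathrm{let}(X)$. A $\mathtt{vsc}$-position $(X',R')$ is a $\mathtt{vsc}$-successor of $(X,R)$ if ($X\preceq X'$ or $X'\preceq X$), $|\mathrm{let}(X)\Delta\mathrm{let}(X')|=1$, and every $v'\in R'$ lies in the same strongly connected component of $G\setminus(\mathrm{let}(X)\cap\mathrm{let}(X'))$ as some $v\in R$. If $(\epsilon,G)$ is not a $\mathtt{vsc}$-position it is nevertheless admitted as a special position whose $\mathtt{vsc}$-successors are exactly the $\mathtt{vsc}$-positions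 $(\epsilon,R)$. A $\mathtt{vsc}$-search from $(X_0,R_0)$ is a finite or infinite sequence of such positions with each $(X_{i+1},R_{i+1})$ a $\mathtt{vsc}$-successor of $(X_i,R_i)$; it is complete if it is infinite or $R_n=\emptyset$ for some $n$, and a complete search is winning for the searchers if $R_n=\emptyset$ for some $n$. A complete search from $(\epsilon,G)$ is searcher-stationary if $X_i\preceq X_{i+1}$ for all $i$ with $R_i\neq\emptyset$, and uses at most $k$ searchers if $|X_i|\le k$ for all $i$. A $\mathtt{vsc}$-strategy is a function $\sigma$ from $\mathtt{vsc}$-positions to $V(G)^*$ such that $\sigma(X,R)$ is the first component of some $\mathtt{vsc}$-successor of $(X,R)$; a search is consistent with $\sigma$ if $X_{i+1}=\sigma(X_i,R_i)$ for all $i$. $\sigma$ is winning if every complete consistent search from $(\epsilon,G)$ is winning for the searchers; it is searcher-stationary / uses at most $k$ searchers if every complete consistent search from $(\epsilon,G)$ has that property. $\mathrm{sstat}_{\mathtt{vsc}}(G)$ is the minimum $k$ such that there is a searcher-stationary winning $\mathtt{vsc}$-strategy using at most $k$ searchers. *)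

(* Digraphs are (T : finType, e : rel T); induced subgraphs
   are identified with their vertex sets {set T}. *)
From mathcomp Require Import all_boot.
Set Implicit Arguments. Unset Strict Implicit. Unset Printing Implicit Defensive.

Section Digraph.
Variables (T : finType) (e : rel T).

Definition erestr (S : {set T}) : rel T := [rel x y | [&& x \in S, y \in S & e x y]].

Definition sconn (S : {set T}) (x y : T) : bool :=
  [&& x \in S, y \in S, connect (erestr S) x y & connect (erestr S) y x].

Definition scc_of (S : {set T}) (x : T) : {set T} := [set y | sconn S x y].

Definition is_scc (S C : {set T}) : bool := [exists x in S, C == scc_of S x].

Definition sccs (S : {set T}) : {set {set T}} := [set C | is_scc S C].

Definition strongly_connected (S : {set T}) : bool :=
  (S != set0) && [forall x in S, forall y in S, sconn S x y].

Definition acyclic (S : {set T}) : bool :=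
  ~~ [exists x in S, exists y in S, erestr S x y && connect (erestr S) y x].

(** cycle rank, by recursion with fuel (fuel #|S| suffices: every recursive
    call is on a proper subset). The minimum over the nonempty S is taken
    with neutral element #|T|, which is an upper bound of all values. *)
Fixpoint cr_rec (n : nat) (S : {set T}) : nat :=
  match n with
  | 0 => 0
  | n'.+1 =>
      if acyclic S then 0
      else if strongly_connected S then
        (\big[minn/#|T|]_(v in S) cr_rec n' (S :\ v)).+1
      else \max_(C in sccs S) cr_rec n' C
  end.

Definition cycle_rank (S : {set T}) : nat := cr_rec #|S| S.

Definition letters (X : seq T) : {set T} := [set x in X].

Definition position := (seq T * {set T})%type.

Definition vsc_pos (p : position) : bool :=
  (p.2 == set0) || is_scc (~: letters p.1) p.2.

Definition start : position := ([::], [set: T]).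

Definition vsc_succ_std (p p' : position) : bool :=
  let: (X, R) := p in let: (X', R') := p' in
  [&& vsc_pos p', prefix X X' || prefix X' X,
      #|(letters X :\: letters X') :|: (letters X' :\: letters X)| == 1 &
      [forall v' in R', exists v in R,
          sconn (~: (letters X :&: letters X')) v v']].

Definition vsc_succ (p p' : position) : bool :=
  if (p == start) && ~~ vsc_pos start then vsc_pos p' && (p'.1 == [::])
  else vsc_succ_std p p'.

Definition is_strategy (sigma : position -> seq T) : Prop :=
  forall p : position, vsc_pos p || (p == start) ->
    exists R' : {set T}, vsc_succ p (sigma p, R').

(** A search is s : nat -> position with length len : option nat
    (None = infinite, Some n = positions s 0, ..., s n). *)
Definition in_range (len : option nat) (i : nat) : bool :=
  if len is Some n then i <= n else true.

Definition is_search_from (p0 : position) (s : nat -> position) (len : option nat) : Prop :=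
  s 0 = p0 /\ forall i, in_range len i.+1 -> vsc_succ (s i) (s i.+1).

Definition complete_search (s : nat -> position) (len : option nat) : Prop :=
  if len is Some n then (s n).2 = set0 else True.

Definition winning_search (s : nat -> position) (len : option nat) : Prop :=
  exists n, in_range len n /\ (s n).2 = set0.

Definition consistent (sigma : position -> seq T) (s : nat -> position) (len : option nat) : Prop :=
  forall i, in_range len i.+1 -> (s i.+1).1 = sigma (s i).

Definition searcher_stationary (s : nat -> position) (len : option nat) : Prop :=
  forall i, in_range len i.+1 -> (s i).2 != set0 -> prefix (s i).1 (s i.+1).1.

Definition uses_at_most (k : nat) (s : nat -> position) (len : option nat) : Prop :=
  forall i, in_range len i -> size (s i).1 <= k.

Definition complete_consistent (sigma : position -> seq T) s len : Prop :=
  [/\ is_search_from start s len, consistent sigma s len & complete_search s len].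

Definition strategy_winning (sigma : position -> seq T) : Prop :=
  forall s len, complete_consistent sigma s len -> winning_search s len.

Definition strategy_stationary (sigma : position -> seq T) : Prop :=
  forall s len, complete_consistent sigma s len -> searcher_stationary s len.

Definition strategy_at_most (k : nat) (sigma : position -> seq T) : Prop :=
  forall s len, complete_consistent sigma s len -> uses_at_most k s len.

(** k is admissible for sstat_vsc: there is a searcher-stationary winning
    vsc-strategy using at most k searchers.  sstat_vsc(G) is the least such k. *)
Definition sstat_admissible (k : nat) : Prop :=
  exists sigma, [/\ is_strategy sigma, strategy_winning sigma,
                    strategy_stationary sigma & strategy_at_most k sigma].

End Digraph.

(* The robber keeps the invariant cr(R) + |let(X)| >= cr(G), with R nonempty.
   Against a searcher-stationary strategy every move adds one vertex v to
   let(X); the robber then moves to an SCC of R \ v, and some SCC of R \ v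
   has cycle rank at least cr(R) - 1.  While |let(X)| < cr(G) the set R \ v
   is nonempty: otherwise R = {v} would be acyclic, contradicting the
   invariant.  So with at most cr(G) searchers R never becomes empty and
   the strategy is not winning. *)
From mathcomp Require Import all_boot order.
Set Implicit Arguments. Unset Strict Implicit. Unset Printing Implicit Defensive.

Section Digraph.
Variables (T : finType) (e : rel T).
Implicit Types (A S C R L : {set T}) (x y z v : T).

Lemma connect_erestr_sub S S' x y : S \subset S' ->
  connect (erestr e S) x y -> connect (erestr e S') x y.
Proof.
move=> sub; apply: connect_sub => a b /and3P[aS bS eab].
by apply: connect1; rewrite /erestr /= eab !(subsetP sub).
Qed.

Lemma sconn_refl S x : x \in S -> sconn e S x x.
Proof. by move=> xS; rewrite /sconn xS connect0. Qed.

Lemma sconn_sym S x y : sconn e S x y -> sconn e S y x.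
Proof. by case/and4P=> ? ? ? ?; apply/and4P. Qed.

Lemma sconn_trans S x y z : sconn e S x y -> sconn e S y z -> sconn e S x z.
Proof.
case/and4P=> xS _ c1 c2 /and4P[_ zS c3 c4].
by rewrite /sconn xS zS (connect_trans c1 c3) (connect_trans c4 c2).
Qed.

Lemma sconn_sub S S' x y : S \subset S' -> sconn e S x y -> sconn e S' x y.
Proof.
move=> sub /and4P[xS yS c1 c2].
by rewrite /sconn !(subsetP sub) // !(connect_erestr_sub sub).
Qed.

Lemma scc_of_sconn S x y : sconn e S x y -> scc_of e S x = scc_of e S y.
Proof.
move=> xy; apply/setP=> z; rewrite !inE; apply/idP/idP.
  exact: sconn_trans (sconn_sym xy).
exact: sconn_trans xy.
Qed.

(* Every vertex of a closed walk through x is strongly connected to x. *)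
Lemma connect_scc_of S x y : connect (erestr e S) x y -> connect (erestr e S) y x ->
  connect (erestr e (scc_of e S x)) x y.
Proof.
case/connectP=> p; elim: p x => [|z p IH] x /=; first by move=> _ ->.
case/andP=> exz pz ly yx; have /and3P[xS zS exz'] := exz.
have xz : sconn e S x z.
  have zy : connect (erestr e S) z y by apply/connectP; exists p.
  by rewrite /sconn xS zS (connect1 exz) (connect_trans zy yx).
rewrite (scc_of_sconn xz); apply: connect_trans (IH _ pz ly (connect_trans yx (connect1 exz))).
rewrite -(scc_of_sconn xz); apply: connect1.
by rewrite /erestr /= exz' !inE xz sconn_refl.
Qed.

Lemma sconn_scc_of S x y : sconn e S x y -> sconn e (scc_of e S x) x y.
Proof.
move=> xy; have /and4P[xS yS c1 c2] := xy.
rewrite /sconn !inE sconn_refl // xy (connect_scc_of c1 c2) /=.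
by rewrite (scc_of_sconn xy) connect_scc_of.
Qed.

Lemma scc_of_is_scc S x : x \in S -> is_scc e S (scc_of e S x).
Proof. by move=> xS; apply/existsP; exists x; rewrite xS eqxx. Qed.

Lemma scc_subset S C : is_scc e S C -> C \subset S.
Proof.
by case/existsP=> x /andP[_ /eqP->]; apply/subsetP=> y; rewrite inE => /and4P[].
Qed.

Lemma scc_strongly_connected S C : is_scc e S C -> strongly_connected e C.
Proof.
case/existsP=> x /andP[xS /eqP->]; apply/andP; split.
  by apply/set0Pn; exists x; rewrite inE sconn_refl.
apply/forallP=> y; apply/implyP; rewrite inE => xy.
apply/forallP=> z; apply/implyP; rewrite inE => xz.
by rewrite (scc_of_sconn xy) sconn_scc_of // (sconn_trans (sconn_sym xy) xz).
Qed.

Lemma scc_neq0 S C : is_scc e S C -> C != set0.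
Proof. by case/scc_strongly_connected/andP. Qed.

Lemma strongly_connected_is_scc S : strongly_connected e S -> is_scc e S S.
Proof.
case/andP=> /set0Pn[x xS] /forallP/(_ x); rewrite xS => /forallP sc.
apply/existsP; exists x; rewrite xS; apply/eqP/setP=> y; rewrite inE.
apply/idP/idP => [yS | /and4P[] //].
by have := sc y; rewrite yS.
Qed.

Lemma scc_proper_card S C : is_scc e S C -> ~~ strongly_connected e S -> #|C| < #|S|.
Proof.
move=> sccC nsc; apply: proper_card; rewrite properEneq scc_subset // andbT.
by apply: contraNneq nsc => <-; apply: scc_strongly_connected sccC.
Qed.

(* Strong connectivity inside A' \subset A never leaves the SCC R of A. *)
Lemma scc_restrict A A' R C : is_scc e A R -> A' \subset A -> is_scc e (R :&: A') C ->
  is_scc e A' C.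
Proof.
case/existsP=> r /andP[rA /eqP defR] sub.
case/existsP=> x /andP[/setIP[xR xA'] /eqP->].
apply/existsP; exists x; rewrite xA'; apply/eqP/setP=> y; rewrite !inE.
apply/idP/idP => [xy | xy]; first exact: sconn_sub (subsetIr _ _) xy.
apply: sconn_sub (sconn_scc_of xy); apply/subsetP=> z; rewrite !inE => xz.
have /and4P[_ zA' _ _] := xz; rewrite zA' andbT defR inE.
by move: xR; rewrite defR inE => /sconn_trans; apply; apply: sconn_sub xz.
Qed.

Lemma acyclic0 : acyclic e set0.
Proof. by apply/negP; case/existsP=> x; rewrite in_set0. Qed.

Lemma cr_rec0 n : cr_rec e n set0 = 0.
Proof. by case: n => //= n; rewrite acyclic0. Qed.

Lemma cr_rec_fuel n m S : #|S| <= n -> #|S| <= m -> cr_rec e n S = cr_rec e m S.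
Proof.
elim: n m S => [|n IH] [|m] S Sn Sm //.
- by move: Sn; rewrite leqn0 cards_eq0 => /eqP->; rewrite !cr_rec0.
- by move: Sm; rewrite leqn0 cards_eq0 => /eqP->; rewrite !cr_rec0.
rewrite /=; case: ifP => // _; case: ifP => sc.
  congr succn; apply: eq_bigr => v vS.
  have lt : #|S :\ v| < #|S| by rewrite (cardsD1 v S) vS.
  by apply: IH; rewrite -ltnS; apply: leq_trans lt _.
apply: eq_bigr => C; rewrite inE => sccC.
have lt := scc_proper_card sccC (negbT sc).
by apply: IH; rewrite -ltnS; apply: leq_trans lt _.
Qed.

Lemma cycle_rank_acyclic S : acyclic e S -> cycle_rank e S = 0.
Proof. by rewrite /cycle_rank; case: #|S| => //= n ->. Qed.

Lemma cycle_rank_setD1 R v : strongly_connected e R ->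
  cycle_rank e R <= (cycle_rank e (R :\ v)).+1.
Proof.
move=> sc; have [vR | vNR] := boolP (v \in R); last first.
  by have -> : R :\ v = R by apply/setDidPl; rewrite disjoint_sym disjoints1.
rewrite /cycle_rank (cardsD1 v R) vR /=; case: ifP => // _; rewrite sc ltnS.
by rewrite -minEnat; exact: (Order.TotalTheory.bigmin_le_cond (T:=nat)).
Qed.

Lemma cycle_rank_le_scc S : S != set0 ->
  exists2 C, is_scc e S C & cycle_rank e S <= cycle_rank e C.
Proof.
case/set0Pn=> x xS.
have [acS | cyclS] := boolP (acyclic e S).
  by exists (scc_of e S x); rewrite ?scc_of_is_scc // cycle_rank_acyclic.
have [scS | nscS] := boolP (strongly_connected e S).
  by exists S; rewrite ?strongly_connected_is_scc.
have : 0 < #|S| by apply/card_gt0P; exists x.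
rewrite /cycle_rank; case cardS: #|S| => [//|n] _ /=; rewrite (negbTE cyclS) (negbTE nscS).
have : 0 < #|sccs e S| by apply/card_gt0P; exists (scc_of e S x); rewrite inE scc_of_is_scc.
case/(eq_bigmax_cond (cr_rec e n)) => C; rewrite inE => sccC ->.
exists C => //; rewrite (@cr_rec_fuel n #|C|) //.
by rewrite -ltnS -cardS scc_proper_card.
Qed.

Lemma letters0 : letters (T:=T) [::] = set0.
Proof. by apply/setP=> x; rewrite !inE. Qed.

Lemma letters_prefix_add1 (X X' : seq T) : prefix X X' ->
  #|(letters X :\: letters X') :|: (letters X' :\: letters X)| == 1 ->
  exists2 v, v \notin letters X & letters X' = v |: letters X.
Proof.
move=> /prefixP[s ->]; set L := letters X; set L' := letters (X ++ s).
have LL' : L \subset L' by apply/subsetP=> x; rewrite !inE mem_cat => ->.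
rewrite (_ : L :\: L' = set0) ?set0U; last by apply/eqP; rewrite setD_eq0.
case/cards1P=> v Dv; exists v.
  by apply/negP=> vL; have := set11 v; rewrite -Dv inE vL.
by rewrite -(setID L' L) (setIidPr LL') Dv setUC.
Qed.

Definition safe c (p : position T) : bool :=
  (p.2 != set0) && (c <= cycle_rank e p.2 + #|letters p.1|).

Lemma safe_start : 0 < #|T| -> safe (cycle_rank e [set: T]) (start T).
Proof.
case/card_gt0P=> x _; rewrite /safe /= letters0 cards0 addn0 leqnn andbT.
by apply/set0Pn; exists x; rewrite inE.
Qed.

Lemma vsc_succ_pos (p p' : position T) : vsc_succ e p p' -> vsc_pos e p'.
Proof.
rewrite /vsc_succ; case: ifP => _; first by case/andP.
by case: p => X R; case: p' => X' R' /and4P[].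
Qed.

Lemma vsc_succ_set0 (p : position T) X' R : vsc_succ e p (X', R) -> vsc_succ e p (X', set0).
Proof.
rewrite /vsc_succ; case: ifP => _; first by case/andP=> _ ->; rewrite /vsc_pos eqxx.
case: p => X R0 /and4P[_ pre card _]; rewrite /= /vsc_pos eqxx pre card /=.
by apply/forallP=> v; rewrite in_set0.
Qed.

Section RobberSearch.
Variables (sigma : position T -> seq T) (c : nat).
Hypothesis sigma_strategy : is_strategy e sigma.

(* The fallback reply set0 is a legal successor whenever sigma p is legal. *)
Definition robber_reply (p : position T) : {set T} :=
  odflt set0 [pick R | vsc_succ e p (sigma p, R) && safe c (sigma p, R)].

Fixpoint robber_search (n : nat) : position T :=
  if n is n'.+1 then (sigma (robber_search n'), robber_reply (robber_search n'))
  else start T.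

Lemma robber_reply_succ p : vsc_pos e p || (p == start T) ->
  vsc_succ e p (sigma p, robber_reply p).
Proof.
move=> valid_p; rewrite /robber_reply; case: pickP => [R /andP[] // | _] /=.
by have [R] := sigma_strategy valid_p; apply: vsc_succ_set0.
Qed.

Lemma robber_reply_safe p R : vsc_succ e p (sigma p, R) && safe c (sigma p, R) ->
  safe c (sigma p, robber_reply p).
Proof.
by move=> ok; rewrite /robber_reply; case: pickP => [R' /andP[] // | /(_ R)]; rewrite ok.
Qed.

Lemma robber_search_valid n :
  vsc_pos e (robber_search n) || (robber_search n == start T).
Proof.
elim: n => [|n IH]; first by rewrite eqxx orbT.
by rewrite (vsc_succ_pos (robber_reply_succ IH)).
Qed.

Lemma robber_search_consistent : complete_consistent e sigma robber_search None.
Proof. by split=> //; split=> // i _; apply: robber_reply_succ; apply: robber_search_valid. Qed.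

End RobberSearch.

Hypothesis e_irr : irreflexive e.

Lemma acyclic_sub1 R v : R \subset [set v] -> acyclic e R.
Proof.
move=> sub; apply/negP=> /existsP[x /andP[xR /existsP[y /andP[yR /andP[/and3P[_ _]]]]]].
have /set1P-> := subsetP sub x xR; have /set1P-> := subsetP sub y yR.
by rewrite e_irr.
Qed.

Lemma scc_escape L R v c : is_scc e (~: L) R ->
  c <= cycle_rank e R + #|L| -> #|L| < c ->
  exists C, [&& is_scc e (~: (v |: L)) C, C \subset R & c <= (cycle_rank e C).+1 + #|L|].
Proof.
move=> sccR safeR Lc; have RL := scc_subset sccR.
have crR := cycle_rank_setD1 v (scc_strongly_connected sccR).
have Rv0 : R :\ v != set0.
  apply: contra_ltnN Lc => /eqP Rv0; apply: leq_trans safeR _.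
  rewrite cycle_rank_acyclic //; apply: (acyclic_sub1 (v := v)); apply/subsetP=> y yR.
  by apply: contraT; rewrite inE => yv; have := in_set0 y; rewrite -Rv0 !inE yv yR.
have [C sccC crC] := cycle_rank_le_scc Rv0.
have DRv : R :\ v = R :&: ~: (v |: L).
  apply/setP=> y; rewrite !inE; case yR: (y \in R); rewrite ?andbF //=.
  by have := subsetP RL y yR; rewrite inE negb_or andbT => ->; rewrite andbT.
exists C; rewrite (scc_restrict sccR _ (etrans _ sccC)) ?DRv ?setCS ?subsetUr //=.
rewrite (subset_trans (scc_subset sccC)) ?subsetDl //=.
by apply: leq_trans safeR _; rewrite leq_add2r (leq_trans crR).
Qed.

Lemma robber_step_std c (X X' : seq T) R R0 : is_scc e (~: letters X) R ->
  c <= cycle_rank e R + #|letters X| -> vsc_succ_std e (X, R) (X', R0) ->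
  prefix X X' -> size X' <= c ->
  exists R', vsc_succ_std e (X, R) (X', R') && safe c (X', R').
Proof.
move=> sccR safeR /and4P[_ pre card _] XX' sizeX'.
have [v vNL DL'] := letters_prefix_add1 XX' card.
have cardL' : #|letters X'| = #|letters X|.+1 by rewrite DL' cardsU1 vNL.
have L'c : #|letters X'| <= c by rewrite cardsE (leq_trans (card_size X')).
have Lc : #|letters X| < c by rewrite -cardL'.
have [C /and3P[sccC CR safeC]] := scc_escape v sccR safeR Lc.
rewrite -DL' in sccC; exists C.
rewrite /safe /= cardL' addnS -addSn safeC (scc_neq0 sccC) andbT.
rewrite /vsc_succ_std /vsc_pos /= sccC orbT pre card andbT /=.
apply/forallP=> w; apply/implyP=> wC; apply/existsP; exists w.
have wR := subsetP CR w wC.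
rewrite wR (setIidPl (_ : _ \subset _)) ?DL' ?subsetUr //.
exact/sconn_refl/(subsetP (scc_subset sccR)).
Qed.

Lemma robber_step c (p : position T) (X' : seq T) : vsc_pos e p || (p == start T) -> safe c p ->
  (exists R0, vsc_succ e p (X', R0)) -> prefix p.1 X' -> size X' <= c ->
  exists R', vsc_succ e p (X', R') && safe c (X', R').
Proof.
case: p => X R /= valid_p /andP[R0 safeR] [R1]; rewrite /vsc_succ.
case: ifP => [/andP[/eqP[DX DR] _] /andP[_ /eqP /= ->] _ _ | nstart succR1 XX' sizeX'].
  subst X R; have [C sccC crC] := cycle_rank_le_scc R0; exists C.
  rewrite /safe /= (scc_neq0 sccC) (leq_trans safeR) /= ?leq_add2r ?andbT //.
  by rewrite /vsc_pos /= letters0 setC0 sccC orbT.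
have sccR : is_scc e (~: letters X) R.
  suff: vsc_pos e (X, R) by rewrite /vsc_pos /= (negbTE R0).
  case/orP: valid_p => // /eqP startp; move: nstart; rewrite startp eqxx /=.
  by case: (vsc_pos e (start T)).
exact: robber_step_std sccR safeR succR1 XX' sizeX'.
Qed.

End Digraph.

Theorem lemma2 (T : finType) (e : rel T) (Hirr : irreflexive e) (Hne : 0 < #|T|)
  (k : nat) :
  sstat_admissible e k -> (cycle_rank e [set: T]).+1 <= k.
Proof.
case=> sigma [strategy winning stationary at_most]; rewrite ltnNge; apply/negP => kc.
set c := cycle_rank e [set: T] in kc.
set s := robber_search e sigma c.
have cc : complete_consistent e sigma s None := robber_search_consistent c strategy.
have safe_s n : safe e c (s n).
  elim: n => [|n safe_n]; first exact: safe_start Hne.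
  have valid_n := robber_search_valid c strategy n.
  have [R' ok] : exists R', vsc_succ e (s n) (sigma (s n), R') && safe e c (sigma (s n), R').
    apply: (robber_step Hirr) => //; first exact: strategy.
    - by apply: (stationary s None cc n isT); case/andP: safe_n.
    - exact: leq_trans (at_most s None cc n.+1 isT) kc.
  exact: robber_reply_safe ok.
have [n [_ sn0]] := winning s None cc.
by have := safe_s n; rewrite /safe sn0 eqxx.
Qed.
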